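(* Let $r\ge2$. A length function $\ell=(\ell^1,\dots,\ell^r)\in\mathbb R_{>0}^r$ on the rose $\mathcal R_r$ has $\mathfrak h_{\mathcal R_r}(\ell)=1$ if and only if $$\overline F_r(\ell):=\sum_{S\subseteq[r]}(1-2|S|)\exp(-\ell^S)=0,$$ where $\ell^S=\sum_{k\in S}\ell^k$. That is, $\mathcal M^1(\mathcal R_r)=\{\ell\in\mathbb R^r_{>0}:\overline F_r(\ell)=0\}$.
   Context: $\mathcal R_r$ is the rose with one vertex and $r$ loop edges identified with $[r]=\{1,\dots,r\}$; a length function assigns $\ell^i>0$ to edge $i$. The entropy is $\mathfrak h_{\mathcal R_r}(\ell)=\lim_{t\to\infty}\frac1t\log\#\{\gamma:\ell(\gamma)\le t\}$, where $\gamma$ ranges over based circuits: edge paths $(e_1,\dots,e_n)$ in the oriented edges (each petal with two orientations $e,\bar e$) with $e_{k+1}\ne\bar e_k$ and $e_n\ne\bar e_1$, and $\ell(\gamma)$ is the sum of the lengths of the edges traversed. $\mathcal M^1(\mathcal R_r)=\{\ell:\mathfrak h_{\mathcal R_r}(\ell)=1\}$. *)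

From HB Require Import structures.
From mathcomp Require Import all_boot all_order all_algebra.
From mathcomp Require Import all_classical all_reals all_analysis.
Set Implicit Arguments. Unset Strict Implicit. Unset Printing Implicit Defensive.
Import Order.TTheory GRing.Theory Num.Theory.
Local Open Scope classical_set_scope.
Local Open Scope ring_scope.

Section Rose.
Variables (R : realType) (r : nat).

(* oriented edges of the rose R_r: petal i with orientation b; (i,~~b) is the reverse *)
Definition oedge := ('I_r * bool)%type.
Definition einv (e : oedge) : oedge := (e.1, ~~ e.2).

(* based circuit: e_{k+1} != inv e_k for all k, and e_1 != inv e_n
   (the cyclic pair (e_n,e_1) is included by [cycle]) *)
Definition no_backtrack (e f : oedge) : bool := f != einv e.
Definition is_circuit (s : seq oedge) : bool := cycle no_backtrack s.

Variable ell : 'I_r -> R.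

Definition plen (s : seq oedge) : R := \sum_(e <- s) ell e.1.

Definition minlen : R := \big[Num.min/1]_(i < r) ell i.

(* A circuit with n+1 edges has length >= (n+1)*minlen, so only
   n <= truncn (t / minlen) contribute; the sum therefore counts all of them. *)
Definition circ_count (t : R) : nat :=
  \sum_(n < (Num.truncn (t / minlen)).+1)
     #|[set c : n.+1.-tuple oedge | is_circuit c && (plen c <= t)%R]|.

Definition entropy_is (h : R) : Prop :=
  (fun t : R => ln ((circ_count t)%:R) / t) @ +oo%R --> (h : R^o).

End Rose.

Definition Fbar (R : realType) (r : nat) (ell : 'I_r -> R) : R :=
  \sum_(S : {set 'I_r}) ((1 - 2 * (#|S|)%:R)%R) * expR (- \sum_(k in S) ell k).

From Pilot Require Import Defs.
From HB Require Import structures.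
From mathcomp Require Import all_boot all_order all_algebra.
From mathcomp Require Import all_classical all_reals all_analysis.
From mathcomp Require Import ring lra.
Import Order.TTheory GRing.Theory Num.Theory.
Local Open Scope ring_scope.
Set Implicit Arguments. Unset Strict Implicit. Unset Printing Implicit Defensive.

(* For a >= 0 give the oriented edge e the weight wt(e) = exp(-a ell(e)) and
   set vt(e) = 1 / (1 + wt(e)) and Phi(a) = sum_e wt(e) vt(e). Reduced paths
   are counted by a first-edge recursion (npathsS); the key identity
   sum_nb_Phi shows that e |-> 2 vt(e) e^{a t} is a supersolution of this
   recursion when Phi(a) <= 1 (npaths_ub) and that c vt(e) e^{a t} is a
   subsolution when Phi(a) >= 1 (npaths_upto_lb). Circuits are compared with
   paths in both directions (ncirc_le_paths, and paths_le_ncirc, which closes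
   a path with two extra edges using two distinct petals), and a circuit of
   length <= t has at most t / minlen edges. Hence N(t) = O(t e^{a t}) when
   Phi(a) <= 1 and N(t) >= K e^{a t} when Phi(a) >= 1, so that the entropy h
   satisfies Phi(h) = 1, and conversely (Phi_of_entropy, entropy_of_Phi, the
   former using continuity of Phi). Finally, expanding over subsets,
   Fbar_r(ell) = prod_i (1 + e^{-ell_i}) (1 - Phi(1)) (Fbar_factor). *)

Lemma card_tuple_cons (T : finType) k (P : pred (k.+1.-tuple T)) :
  #|[set c | P c]| = (\sum_x #|[set s : k.-tuple T | P [tuple of x :: s]]|)%N.
Proof.
rewrite -sum1dep_card.
under [RHS]eq_bigr => x _ do rewrite -sum1dep_card.
rewrite pair_big_dep (reindex (fun p : T * k.-tuple T => [tuple of p.1 :: p.2])) /=.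
  by apply: eq_bigl => -[x s].
exists (fun c : k.+1.-tuple T => (thead c, [tuple of behead c])) => [[x s]|c] _ /=.
  by congr pair; apply: val_inj.
by rewrite [RHS]tuple_eta.
Qed.

Section Paths.
Variables (R : realType) (r : nat) (ell : 'I_r -> R).
Local Notation oe := (oedge r).
Local Notation nb := (@no_backtrack r).
Local Notation plen := (plen ell).

Lemma plen_cons x s : plen (x :: s) = ell x.1 + plen s.
Proof. by rewrite /Defs.plen big_cons. Qed.

Lemma einvK (x : oe) : einv (einv x) = x.
Proof. by case: x => i b; rewrite /einv /= negbK. Qed.

Lemma einv_neq (x : oe) : x != einv x.
Proof. by case: x => i b; rewrite /einv xpair_eqE /= eqxx /=; case: b. Qed.

Definition npaths k (e : oe) (t : R) : nat :=
  #|[set s : k.-tuple oe | path nb e s && (plen s <= t)]|.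

Lemma npaths0 e t : npaths 0 e t = (0 <= t) :> nat.
Proof.
rewrite /npaths; case: (boolP (0 <= t)) => ht.
  rewrite /= -(cards1 ([tuple] : 0.-tuple oe)); apply: eq_card => s.
  by rewrite tuple0 !inE /Defs.plen big_nil ht; apply/esym/eqP.
apply: eq_card0 => s.
by rewrite tuple0 !inE /Defs.plen big_nil (negbTE ht).
Qed.

Lemma npathsS k e t :
  npaths k.+1 e t = (\sum_(f | f != einv e) npaths k f (t - ell f.1))%N.
Proof.
rewrite /npaths card_tuple_cons [RHS]big_mkcond /=; apply: eq_bigr => f _.
case: ifPn => hf.
  by apply: eq_card => s; rewrite !inE /= plen_cons /no_backtrack hf /= lerBrDl.
by apply: eq_card0 => s; rewrite !inE /= /no_backtrack (negbTE hf).
Qed.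

Definition ncirc k (t : R) : nat :=
  #|[set c : k.+1.-tuple oe | is_circuit c && (plen c <= t)]|.

(* Forgetting the closing condition, a circuit e :: s is a path s after e. *)
Lemma ncirc_le_paths k t :
  (ncirc k t <= \sum_(e : oe) npaths k e (t - ell e.1))%N.
Proof.
rewrite /ncirc card_tuple_cons; apply: leq_sum => e _.
apply: subset_leq_card; apply/fintype.subsetP => s; rewrite !inE /is_circuit /=.
by rewrite rcons_path plen_cons lerBrDl => /andP[/andP[-> _] ->].
Qed.

Definition totlen : R := \sum_i ell i.

Section Closing.
Hypothesis ell_gt0 : forall i, 0 < ell i.
Variables (j0 j1 : 'I_r).
Hypothesis j01 : j0 != j1.

Lemma ell_le_totlen i : ell i <= totlen.
Proof. by rewrite /totlen (bigD1 i) //= lerDl sumr_ge0 // => j _; exact: ltW. Qed.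

(* An edge that may be inserted between x and e0 without backtracking:
   e0 itself unless x = einv e0, in which case any edge on another petal. *)
Definition closing_edge (e0 x : oe) : oe :=
  if x != einv e0 then e0 else ((if e0.1 == j0 then j1 else j0), true).

Lemma closing_edge_nb e0 x :
  nb (closing_edge e0 x) e0 && nb x (closing_edge e0 x).
Proof.
rewrite /no_backtrack /closing_edge; case: ifPn => hx.
  rewrite einv_neq /=; apply: contraNneq hx => ->; by rewrite einvK.
move/negPn/eqP: hx => ->; rewrite einvK.
have hne : (if e0.1 == j0 then j1 else j0) != e0.1.
  by case: ifPn => [/eqP ->|h]; rewrite eq_sym.
rewrite /einv /=; case: e0 hne => i b /= hne.
by rewrite !xpair_eqE (negbTE hne) eq_sym (negbTE hne).
Qed.

(* Conversely, a path s after e0 closes up to the circuit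
   closing_edge :: e0 :: s with two more edges and length at most
   ell e0 + plen s + totlen; this injection needs two distinct petals. *)
Lemma paths_le_ncirc k e0 t :
  (npaths k e0 (t - ell e0.1) <= ncirc k.+1 (t + totlen))%N.
Proof.
pose close (s : k.-tuple oe) : k.+2.-tuple oe :=
  [tuple of closing_edge e0 (last e0 s) :: e0 :: s].
have close_inj : injective close.
  move=> s1 s2 /(congr1 (fun c : k.+2.-tuple oe => behead (behead (val c)))) /= h.
  exact: val_inj.
rewrite /npaths /ncirc -(card_imset _ close_inj); apply: subset_leq_card.
apply/fintype.subsetP => c /imsetP[s]; rewrite inE => /andP[hp hl] ->.
have /andP[h1 h2] := closing_edge_nb e0 (last e0 s).
rewrite inE /close /is_circuit /= h1 rcons_path hp h2 /= !plen_cons.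
by rewrite [t + _]addrC lerD ?ell_le_totlen // -lerBrDl.
Qed.
End Closing.
End Paths.

Section ShortCircuits.
Variables (R : realType) (r : nat) (ell : 'I_r -> R).
Hypothesis ell_gt0 : forall i, 0 < ell i.
Local Notation m := (minlen ell).

Lemma minlen_gt0 : 0 < m.
Proof. by rewrite /minlen; elim/big_rec: _ => // i x _ hx; rewrite lt_min hx ell_gt0. Qed.

Lemma minlen_le i : m <= ell i.
Proof. exact: bigmin_le. Qed.

Lemma plen_ge (s : seq (oedge r)) : (size s)%:R * m <= plen ell s.
Proof.
elim: s => [|x s IH]; first by rewrite /Defs.plen big_nil mul0r.
by rewrite plen_cons /= -addn1 natrD mulrDl mul1r addrC lerD // minlen_le.
Qed.

(* A circuit with k+1 edges has length at least (k+1) * minlen. *)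
Lemma ncirc_eq0 k t : t < k.+1%:R * m -> ncirc ell k t = 0%N.
Proof.
move=> ht; apply: eq_card0 => c; rewrite !inE; apply/negbTE.
rewrite negb_and -ltNge; apply/orP; right; apply: lt_le_trans ht _.
by have := plen_ge c; rewrite size_tuple.
Qed.

Lemma circ_countE t :
  circ_count ell t = (\sum_(n < (Num.truncn (t / m)).+1) ncirc ell n t)%N.
Proof.
by apply: eq_bigr => n _; apply: eq_card => c; rewrite [RHS]inE; exact: asboolb.
Qed.

Lemma sum_ncirc_le K t : (\sum_(k < K) ncirc ell k t <= circ_count ell t)%N.
Proof.
rewrite circ_countE; set M := (Num.truncn (t / m)).+1.
case: (leqP K M) => hK.
  by rewrite -(subnKC hK) big_split_ord /= leq_addr.
rewrite -(subnKC (ltnW hK)) big_split_ord /= [X in (_ + X)%N]big1 ?addn0 // => i _.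
apply: ncirc_eq0; have := truncnS_gt (t / m).
rewrite ltr_pdivrMr ?minlen_gt0 // => h; apply: lt_le_trans h _.
by rewrite ler_wpM2r ?ltW ?minlen_gt0 // ltr_nat /M ltnS leq_addr.
Qed.
End ShortCircuits.

Section Weights.
Variables (R : realType) (r : nat) (ell : 'I_r -> R).
Hypothesis ell_gt0 : forall i, 0 < ell i.
Variable a : R.
Hypothesis a_ge0 : 0 <= a.
Local Notation oe := (oedge r).

Definition wt (e : oe) : R := expR (- (a * ell e.1)).
Definition vt (e : oe) : R := (1 + wt e)^-1.
Definition Phi : R := \sum_(e : oe) wt e * vt e.

Lemma wt_gt0 e : 0 < wt e. Proof. exact: expR_gt0. Qed.

Lemma wt_le1 e : wt e <= 1.
Proof. by rewrite /wt expR_le1 oppr_le0 mulr_ge0 // ltW. Qed.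

Lemma vt_gt0 e : 0 < vt e.
Proof. by rewrite /vt invr_gt0 addr_gt0 // wt_gt0. Qed.

Lemma vt_le1 e : vt e <= 1.
Proof. by rewrite /vt invf_le1 ?lerDl ?ltW ?wt_gt0 // addr_gt0 // wt_gt0. Qed.

Lemma vt_ge_half e : 1 <= 2 * vt e.
Proof.
have h : 0 < 1 + wt e by rewrite addr_gt0 // wt_gt0.
rewrite /vt -(ler_pM2r h) mul1r -mulrA mulVf ?gt_eqF // mulr1.
by rewrite -[2]/(1 + 1) lerD2l wt_le1.
Qed.

Lemma wt_vt e : wt e * vt e = 1 - vt e.
Proof.
have h : 1 + wt e != 0 by rewrite gt_eqF // addr_gt0 // wt_gt0.
by rewrite /vt; field.
Qed.

(* Key identity: summing the Phi-terms over the edges allowed after e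
   leaves out exactly einv e, whose term is 1 - vt e. *)
Lemma sum_nb_Phi e : \sum_(f | f != einv e) wt f * vt f = vt e + (Phi - 1).
Proof. by rewrite /Phi [in RHS](bigD1 (einv e)) //= wt_vt; ring. Qed.

Lemma expR_shift t e : expR (a * (t - ell e.1)) = expR (a * t) * wt e.
Proof. by rewrite /wt -expRD mulrBr. Qed.

Lemma npaths_ub : Phi <= 1 -> forall k e t,
  (npaths ell k e t)%:R <= 2 * vt e * expR (a * t).
Proof.
move=> hPhi; elim=> [|k IH] e t.
  rewrite npaths0; case: (boolP (0 <= t)) => ht /=.
    rewrite -[1%:R]mulr1; apply: ler_pM => //; first exact: vt_ge_half.
    by rewrite -expR0 ler_expR mulr_ge0.
  by rewrite !mulr_ge0 ?expR_ge0 // ltW // vt_gt0.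
rewrite npathsS natr_sum.
apply: (@le_trans _ _ (\sum_(f | f != einv e) 2 * expR (a * t) * (wt f * vt f))).
  apply: ler_sum => f _; apply: le_trans (IH f _) _.
  by rewrite expR_shift; lra.
rewrite -mulr_sumr sum_nb_Phi [2 * vt e * _]mulrAC ler_wpM2l ?mulr_ge0 ?expR_ge0 //.
by rewrite gerDl subr_le0.
Qed.

Definition npaths_upto n e t : nat := (\sum_(k < n.+1) npaths ell k e t)%N.

Lemma npaths_uptoS n e t : npaths_upto n.+1 e t =
  ((0 <= t)%R + \sum_(f | f != einv e) npaths_upto n f (t - ell f.1))%N.
Proof.
rewrite /npaths_upto big_ord_recl npaths0; congr addn.
rewrite exchange_big; apply: eq_bigr => f _.
by rewrite lift0 npathsS.
Qed.

(* Below the total length, the empty path alone gives the subsolution bound,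
   as the bound is then at most 1. *)
Lemma npaths_upto_lb_base n e t : 0 <= t -> t <= totlen ell ->
  expR (- (a * totlen ell)) * vt e * expR (a * t) <= (npaths_upto n e t)%:R.
Proof.
move=> t0 tL; apply: (@le_trans _ _ 1); last first.
  by rewrite /npaths_upto big_ord_recl npaths0 t0 ler1n.
apply: (@le_trans _ _ (expR (- (a * totlen ell)) * 1 * expR (a * totlen ell))).
  apply: ler_pM; rewrite ?expR_ge0 //.
  - by rewrite mulr_ge0 ?expR_ge0 // ltW // vt_gt0.
  - by rewrite ler_pM2l ?expR_gt0 // vt_le1.
  - by rewrite ler_expR ler_wpM2l.
by rewrite mulr1 -expRD addNr expR0.
Qed.

Lemma npaths_upto_lb : 1 <= Phi -> forall n e t, 0 <= t -> t <= n%:R * minlen ell ->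
  expR (- (a * totlen ell)) * vt e * expR (a * t) <= (npaths_upto n e t)%:R.
Proof.
move=> hPhi; elim=> [|n IH] e t t0 tn.
  apply: npaths_upto_lb_base => //; apply: le_trans tn _.
  by rewrite mul0r sumr_ge0 // => i _; exact: ltW.
have [tL|Lt] := leP t (totlen ell); first exact: npaths_upto_lb_base.
rewrite npaths_uptoS natrD; apply: ler_wpDl => //; rewrite natr_sum.
apply: (@le_trans _ _
  (\sum_(f | f != einv e) expR (- (a * totlen ell)) * expR (a * t) * (wt f * vt f))).
  rewrite -mulr_sumr sum_nb_Phi [_ * vt e * _]mulrAC.
  by rewrite ler_wpM2l ?mulr_ge0 ?expR_ge0 // lerDl subr_ge0.
apply: ler_sum => f _; apply: le_trans (IH f (t - ell f.1) _ _).
- by rewrite expR_shift; lra.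
- by rewrite subr_ge0; apply: le_trans (ell_le_totlen ell_gt0 f.1) (ltW Lt).
- rewrite lerBlDr; apply: (le_trans tn).
  by rewrite -addn1 natrD mulrDl mul1r lerD2l minlen_le.
Qed.

Lemma ncirc_ub : Phi <= 1 -> forall n t, (ncirc ell n t)%:R <= 2 * expR (a * t).
Proof.
move=> hPhi n t; apply: (@le_trans _ _ (\sum_(e : oe) npaths ell n e (t - ell e.1))%:R).
  by rewrite ler_nat ncirc_le_paths.
rewrite natr_sum.
apply: (@le_trans _ _ (\sum_(e : oe) 2 * expR (a * t) * (wt e * vt e))).
  apply: ler_sum => e _; apply: le_trans (npaths_ub hPhi _ _ _) _.
  by rewrite expR_shift; lra.
by rewrite -mulr_sumr -/Phi ler_piMr // mulr_ge0 ?expR_ge0.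
Qed.

(* If Phi(a) <= 1, the number of circuits of length at most t is
   O(t e^{a t}): there are at most t / minlen + 1 sizes to sum over. *)
Lemma circ_count_ub : Phi <= 1 -> forall t, 0 <= t ->
  (circ_count ell t)%:R <= 2 * (t / minlen ell + 1) * expR (a * t).
Proof.
move=> hPhi t t0; rewrite circ_countE natr_sum.
apply: (@le_trans _ _ (\sum_(n < (Num.truncn (t / minlen ell)).+1) 2 * expR (a * t))).
  by apply: ler_sum => n _; apply: ncirc_ub.
rewrite sumr_const card_ord -[_ *+ _]mulr_natr [X in _ <= X]mulrAC.
rewrite ler_pM2l ?mulr_gt0 ?expR_gt0 // -addn1 natrD lerD2r truncn_le.
by rewrite divr_ge0 // ltW // minlen_gt0.
Qed.

(* If Phi(a) >= 1 and the rose has two petals, the number of circuits of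
   length at most t is eventually at least K e^{a t}: close up the paths
   after a fixed edge e0 counted by npaths_upto_lb. *)
Lemma circ_count_lb : (1 < r)%N -> 1 <= Phi -> exists2 K, 0 < K &
  forall t, 2 * totlen ell <= t -> K * expR (a * t) <= (circ_count ell t)%:R.
Proof.
move=> hr hPhi.
pose j0 : 'I_r := Ordinal (ltnW hr); pose j1 : 'I_r := Ordinal hr.
have j01 : j0 != j1 by [].
pose e0 : oe := (j0, true); pose L := totlen ell.
exists (expR (- (a * L)) * vt e0 * expR (- (a * (L + ell e0.1)))).
  by rewrite !mulr_gt0 ?expR_gt0 ?vt_gt0.
move=> t tL; pose t' := t - L - ell e0.1.
have t'0 : 0 <= t'.
  by have := ell_le_totlen ell_gt0 e0.1; rewrite /t' /L; lra.
pose n := (Num.truncn (t' / minlen ell)).+1.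
have t'n : t' <= n%:R * minlen ell.
  by have := truncnS_gt (t' / minlen ell); rewrite ltr_pdivrMr ?minlen_gt0 // => /ltW.
have := npaths_upto_lb hPhi e0 t'0 t'n.
have -> : expR (a * t') = expR (a * t) * expR (- (a * (L + ell e0.1))).
  by rewrite -expRD /t'; congr expR; ring.
move=> hlb; apply: le_trans (_ : _ <= (npaths_upto n e0 t')%:R) _.
  by apply: le_trans hlb; lra.
rewrite ler_nat; apply: leq_trans (sum_ncirc_le ell_gt0 n.+2 t).
rewrite [X in (_ <= X)%N]big_ord_recl; apply: leq_trans (leq_addl _ _).
apply: leq_sum => k _; have := paths_le_ncirc ell_gt0 j01 k e0 (t - L).
by rewrite subrK.
Qed.
End Weights.

Section SubsetSums.
Variables (F : comNzRingType) (n : nat) (u : 'I_n -> F).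

Lemma prod_if_in (S : {set 'I_n}) :
  \prod_(j in S) u j = \prod_j (if j \in S then u j else 1).
Proof. exact: big_mkcond. Qed.

Lemma sum_subset_prod : \sum_(S : {set 'I_n}) \prod_(j in S) u j = \prod_j (1 + u j).
Proof.
rewrite (eq_bigr _ (fun S _ => prod_if_in S)).
by rewrite (eq_bigr (fun j => u j + 1)) ?bigA_distr // => j _; rewrite addrC.
Qed.

(* Weighting each subset by its size: the derivative-like companion of
   sum_subset_prod, since |S| = sum_i [i in S]. *)
Lemma sum_subset_card_prod : \sum_(S : {set 'I_n}) #|S|%:R * \prod_(j in S) u j =
  \sum_i u i * \prod_(j | j != i) (1 + u j).
Proof.
have mark i (S : {set 'I_n}) : (i \in S)%:R * \prod_(j in S) u j =
    \prod_j (if j \in S then u j else (j != i)%:R).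
  case: (boolP (i \in S)) => iS.
    rewrite mul1r prod_if_in; apply: eq_bigr => j _; case: ifPn => // jS.
    by have -> : j != i by apply: contraNneq jS => ->.
  by rewrite mul0r (bigD1 i) //= (negbTE iS) eqxx mul0r.
transitivity (\sum_(S : {set 'I_n}) \sum_i (i \in S)%:R * \prod_(j in S) u j).
  apply: eq_bigr => S _; rewrite -sum1_card big_mkcond /= natr_sum mulr_suml.
  by apply: eq_bigr => i _; case: (i \in S).
rewrite exchange_big; apply: eq_bigr => i _.
under eq_bigr do rewrite mark.
rewrite -bigA_distr (bigD1 i) //= eqxx addr0; congr (_ * _).
by apply: eq_bigr => j /negbTE ->; rewrite addrC.
Qed.
End SubsetSums.

Section Fbar.
Variables (R : realType) (r : nat) (ell : 'I_r -> R).
Let u i := expR (- ell i).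

(* At a = 1 the two orientations of petal i contribute equally. *)
Lemma Phi1E : Phi ell 1 = \sum_i 2 * (u i / (1 + u i)).
Proof.
transitivity (\sum_i \sum_(b : bool) wt ell 1 (i, b) * vt ell 1 (i, b)).
  by rewrite pair_bigA; apply: eq_bigr => -[i b].
apply: eq_bigr => i _; rewrite big_bool /vt /wt /= mul1r -/(u i).
have hu : 1 + u i != 0 by rewrite gt_eqF // addr_gt0 // expR_gt0.
by field.
Qed.

Lemma Fbar_factor : Fbar ell = (\prod_i (1 + u i)) * (1 - Phi ell 1).
Proof.
have -> : Fbar ell = \sum_(S : {set 'I_r}) (1 - 2 * #|S|%:R) * \prod_(j in S) u j.
  by apply: eq_bigr => S _; rewrite -sumrN expR_sum.
rewrite (eq_bigr (fun S : {set 'I_r} =>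
  \prod_(j in S) u j - 2 * (#|S|%:R * \prod_(j in S) u j))); last first.
  by move=> S _; rewrite mulrBl mul1r mulrA.
rewrite sumrB -mulr_sumr sum_subset_prod sum_subset_card_prod Phi1E.
rewrite mulrBr mulr1 mulr_sumr [in RHS]mulr_sumr; congr (_ - _).
apply: eq_bigr => i _; rewrite [in RHS](bigD1 i) //=.
have hu : 1 + u i != 0 by rewrite gt_eqF // addr_gt0 // expR_gt0.
by field.
Qed.

Lemma Fbar_eq0 : Fbar ell = 0 <-> Phi ell 1 = 1.
Proof.
have hprod : \prod_i (1 + u i) != 0.
  by rewrite gt_eqF // prodr_gt0 // => i _; rewrite addr_gt0 // expR_gt0.
rewrite Fbar_factor; split => [/eqP|->]; last by rewrite subrr mulr0.
by rewrite mulf_eq0 (negbTE hprod) subr_eq0 => /eqP <-.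
Qed.
End Fbar.

Section Continuity.
Local Open Scope classical_set_scope.
Variables (R : realType) (r : nat) (ell : 'I_r -> R).

Lemma Phi_cvg (a0 : R) : Phi ell a @[a --> (a0 : R^o)] --> (Phi ell a0 : R^o).
Proof.
have wt_cvg e : wt ell a e @[a --> (a0 : R^o)] --> (wt ell a0 e : R^o).
  apply: (@cvg_comp _ _ _ (fun a => - (a * ell e.1)) expR _ (nbhs (- (a0 * ell e.1)))).
    by apply: cvgN; apply: cvgMr_tmp; exact: cvg_id.
  exact: continuous_expR.
have vt_cvg e : vt ell a e @[a --> (a0 : R^o)] --> (vt ell a0 e : R^o).
  apply: cvgV; first by rewrite gt_eqF // addr_gt0 // expR_gt0.
  exact: cvgD (cvg_cst _) (wt_cvg e).
apply: (cvg_big (op := +%R) (x0 := 0) (P := xpredT)) => // [|e _].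
  exact: add_continuous.
exact: cvgM (wt_cvg e) (vt_cvg e).
Qed.
End Continuity.

Section Entropy.
Local Open Scope classical_set_scope.
Variables (R : realType) (r : nat) (ell : 'I_r -> R).
Hypothesis ell_gt0 : forall i, 0 < ell i.
Local Notation N t := ((circ_count ell t)%:R : R).

Lemma near_pinfty_le_linear (c d : R) : 0 < d -> \forall t \near +oo, c <= d * t.
Proof.
move=> d0; apply: filterS (nbhs_pinfty_gt (num_real (`|c| / d))) => t ht.
by apply: le_trans (ler_norm c) _; rewrite mulrC -ler_pdivrMr // ltW.
Qed.

Lemma affine_le_exp (d m t : R) : 0 < d -> 0 < m -> 0 <= t ->
  t / m + 1 <= ((d * m)^-1 + 1) * expR (d * t).
Proof.
move=> d0 m0 t0.
have dt_le : d * t <= expR (d * t) by have := expR_ge1Dx (d * t); lra.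
have exp_ge1 : 1 <= expR (d * t) by rewrite -expR0 ler_expR mulr_ge0 // ltW.
have -> : t / m = (d * m)^-1 * (d * t) by field; rewrite ?gt_eqF.
by rewrite mulrDl mul1r lerD // ler_wpM2l // invr_ge0 mulr_ge0 // ltW.
Qed.

Lemma entropy_near_le a : 0 <= a -> Phi ell a <= 1 -> forall eps, 0 < eps ->
  \forall t \near +oo, ln (N t) / t <= a + eps.
Proof.
move=> a0 hPhi eps eps0; pose d := eps / 2; have d0 : 0 < d by rewrite divr_gt0.
have m0 := minlen_gt0 ell_gt0; pose K := 2 * ((d * minlen ell)^-1 + 1).
have K0 : 0 < K by rewrite mulr_gt0 // addr_gt0 // invr_gt0 mulr_gt0.
near=> t.
have t0 : 0 < t by near: t; exact: nbhs_pinfty_gt.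
have lnK_le : ln K <= d * t by near: t; exact: near_pinfty_le_linear.
have NK : N t <= K * expR ((a + d) * t).
  apply: le_trans (circ_count_ub ell_gt0 a0 hPhi (ltW t0)) _.
  have -> : K * expR ((a + d) * t) =
      2 * (((d * minlen ell)^-1 + 1) * expR (d * t)) * expR (a * t).
    by rewrite mulrDl expRD /K; ring.
  by rewrite ler_pM2r ?expR_gt0 // ler_pM2l // affine_le_exp.
rewrite ler_pdivrMr //; have [N0|N0] := leP (N t) 0.
  by rewrite ln0 // mulr_ge0 ?addr_ge0 // ltW.
have : ln (N t) <= ln K + (a + d) * t.
  by rewrite -ler_expR lnK ?posrE // expRD lnK ?posrE.
rewrite /d in lnK_le *; lra.
Unshelve. all: by end_near.
Qed.

Lemma entropy_near_ge a : (1 < r)%N -> 0 <= a -> 1 <= Phi ell a ->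
  forall eps, 0 < eps -> \forall t \near +oo, a - eps <= ln (N t) / t.
Proof.
move=> hr a0 hPhi eps eps0; have [K K0 NK] := circ_count_lb ell_gt0 a0 hr hPhi.
near=> t.
have t0 : 0 < t by near: t; exact: nbhs_pinfty_gt.
have tL : 2 * totlen ell <= t by near: t; exact: (nbhs_pinfty_ge (num_real _)).
have lnK_ge : - ln K <= eps * t by near: t; exact: near_pinfty_le_linear.
have N0 : 0 < N t by apply: lt_le_trans (NK t tL); rewrite mulr_gt0 // expR_gt0.
have : ln K + a * t <= ln (N t).
  by rewrite -ler_expR lnK ?posrE // expRD lnK ?posrE // NK.
rewrite ler_pdivlMr //; lra.
Unshelve. all: by end_near.
Qed.

Lemma entropy_le h a : 0 <= a -> Phi ell a <= 1 -> entropy_is ell h -> h <= a.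
Proof.
move=> a0 hPhi hh; apply/ler_addgt0Pr => eps eps0.
have eps2 : 0 < eps / 2 by rewrite divr_gt0.
have [t [ht]] := filter_ex (filterI (entropy_near_le a0 hPhi eps2)
  ((cvgrPdist_le _ _).1 hh _ eps2)).
by rewrite ler_norml => /andP[]; lra.
Qed.

Lemma entropy_ge h a : (1 < r)%N -> 0 <= a -> 1 <= Phi ell a ->
  entropy_is ell h -> a <= h.
Proof.
move=> hr a0 hPhi hh; apply/ler_addgt0Pr => eps eps0.
have eps2 : 0 < eps / 2 by rewrite divr_gt0.
have [t [ht]] := filter_ex (filterI (entropy_near_ge hr a0 hPhi eps2)
  ((cvgrPdist_le _ _).1 hh _ eps2)).
by rewrite ler_norml => /andP[]; lra.
Qed.

Lemma entropy_of_Phi a : (1 < r)%N -> 0 <= a -> Phi ell a = 1 -> entropy_is ell a.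
Proof.
move=> hr a0 hPhi; apply/cvgrPdist_le => eps eps0.
have [Phi_le Phi_ge] : Phi ell a <= 1 /\ 1 <= Phi ell a by rewrite hPhi.
apply: filterS2 (entropy_near_le a0 Phi_le eps0) (entropy_near_ge hr a0 Phi_ge eps0).
by move=> t h1 h2; rewrite ler_norml; apply/andP; split; lra.
Qed.

(* Conversely a positive entropy h solves Phi(h) = 1: otherwise, by
   continuity, Phi stays on the same side of 1 slightly below (resp. above)
   h, contradicting entropy_le (resp. entropy_ge). *)
Lemma Phi_of_entropy h : (1 < r)%N -> 0 < h -> entropy_is ell h -> Phi ell h = 1.
Proof.
move=> hr h0 hh; have [Phi_lt|Phi_gt|//] := ltgtP (Phi ell h) 1.
  have near_lt : \forall a \near h^'-, Phi ell a < 1.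
    by apply: cvg_within; exact: cvgr_lt (@Phi_cvg R r ell h) _ Phi_lt.
  have [a [[Pa ah] a0]] := @filter_ex _ _ (at_left_proper_filter h) _
    (filterI (filterI near_lt (nbhs_left_lt h)) (nbhs_left_ge h0)).
  by have := entropy_le a0 (ltW Pa) hh; lra.
have near_gt : \forall a \near h^'+, 1 < Phi ell a.
  by apply: cvg_within; exact: cvgr_gt (@Phi_cvg R r ell h) _ Phi_gt.
have [a [Pa ha]] := @filter_ex _ _ (at_right_proper_filter h) _
  (filterI near_gt (nbhs_right_gt h)).
by have := entropy_ge hr (ltW (lt_trans h0 ha)) (ltW Pa) hh; lra.
Qed.
End Entropy.

Theorem mainTheorem12 (R : realType) (r : nat) (ell : 'I_r -> R) :
  (2 <= r)%N -> (forall i, 0 < ell i) ->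
  (entropy_is ell 1 <-> Fbar ell = 0).
Proof.
move=> hr ell_gt0; rewrite Fbar_eq0; split.
  by apply: Phi_of_entropy.
by apply: entropy_of_Phi.
Qed.
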